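(* Let $p,q$ be coprime positive integers with $p\le q$, let $m$ be a positive integer, let $H_{q-p}\subset\mathbb C^5$ be the hypersurface $X_0^{q-p}=X_1X_4-X_2X_3$ with the action of $G=G_0\times G_m$ described in the context, and let $\pi:H_{q-p}\to H_{q-p}/\!\!/G$ be the quotient morphism. Then the Hilbert function $h$ of the general fibers of $\pi$ coincides with that of the regular representation $\mathbb C[G_0\times G_m]$, i.e. $h(n,d)=1$ for all $(n,d)\in\mathbb Z\times\mathbb Z/m\mathbb Z$.
   Context: $G_0\cong\mathbb C^*$ acts on $\mathbb C^5$ by $t\cdot(x_0,\dots,x_4)=(tx_0,t^{-p}x_1,t^{-p}x_2,t^{q}x_3,t^{q}x_4)$ and $G_m\cong\mu_m$ by $\zeta\cdot(x_0,\dots,x_4)=(x_0,\zeta^{-1}x_1,\zeta^{-1}x_2,\zeta x_3,\zeta x_4)$. The irreducible representations of $G$ are identified with $\mathbb Z\times\mathbb Z/m\mathbb Z$; for a $G$-module $V$ write $V_{(n,d)}$ for the multiplicity space $\operatorname{Hom}^G(M_{(n,d)},V)$ of the irreducible representation of weight $(n,d)$. By generic flatness, $\pi$ is flat over a nonempty open subset $Y_0$ of $H_{q-p}/\!\!/G$, and all scheme-theoretic fibers $\pi^{-1}(y)$, $y\in Y_0$, have the same Hilbert function $(n,d)\mapsto\dim\mathbb C[\pi^{-1}(y)]_{(n,d)}$; this is the Hilbert function of the general fibers. *)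

From HB Require Import structures.
From mathcomp Require Import all_boot all_order all_algebra.
From mathcomp Require Import mpoly.
Set Implicit Arguments. Unset Strict Implicit. Unset Printing Implicit Defensive.
Import Order.TTheory GRing.Theory Num.Theory.
Local Open Scope ring_scope.

Section Defs.
Variable K : numClosedFieldType. (* algebraically closed field of char 0, e.g. C *)
Variables (p q m : nat).

Notation Poly := {mpoly K[5]}.

(* Scalar by which (t, zeta) in G_0 x G_m multiplies the coordinate x_i:
   t.(x0,...,x4) = (t x0, t^-p x1, t^-p x2, t^q x3, t^q x4),
   zeta.(x0,...,x4) = (x0, zeta^-1 x1, zeta^-1 x2, zeta x3, zeta x4). *)
Definition wcoord (t z : K) (i : 'I_5) : K :=
  if (val i == 0)%N then t
  else if (val i <= 2)%N then t ^- p * z^-1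
  else t ^+ q * z.

Definition gact (t z : K) (g : Poly) : Poly :=
  g \mPo [tuple wcoord t z i *: 'X_i | i < 5].

Definition is_weight (n : int) (d : 'I_m) (g : Poly) : Prop :=
  forall t z : K, t != 0 -> z ^+ m = 1 -> gact t z g = (t ^ n * z ^+ d) *: g.

Definition G_invariant (g : Poly) : Prop :=
  forall t z : K, t != 0 -> z ^+ m = 1 -> gact t z g = g.

Definition Hpoly : Poly :=
  'X_(0 : 'I_5) ^+ (q - p) - ('X_(1 : 'I_5) * 'X_(4 : 'I_5)
                               - 'X_(2 : 'I_5) * 'X_(3 : 'I_5)).

Definition onH (x : 'I_5 -> K) : Prop := Hpoly.@[x] = 0.

Definition in_ideal (S : Poly -> Prop) (g : Poly) : Prop :=
  exists s : seq (Poly * Poly),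
    (forall c, c \in s -> S c.2) /\ g = \sum_(c <- s) c.1 * c.2.

(* Generators of the ideal defining the scheme-theoretic fiber pi^-1(pi(x))
   inside C^5: the equation of H, and g - g(x) for all invariants g
   (these generate m_{pi(x)} C[H]). *)
Definition fiber_gen (x : 'I_5 -> K) (g : Poly) : Prop :=
  g = Hpoly \/ exists h, G_invariant h /\ g = h - (h.@[x])%:MP.

(* dim C[pi^-1(pi(x))]_(n,d) = 1 : the (n,d)-isotypic component of the fiber
   ring C[X]/I_x (which is the image of the weight space C[X]_(n,d)) is
   one-dimensional. *)
Definition fiber_hilb_one (x : 'I_5 -> K) (n : int) (d : 'I_m) : Prop :=
  exists v : Poly, is_weight n d v /\ ~ in_ideal (fiber_gen x) v /\
    forall w : Poly, is_weight n d w ->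
      exists c : K, in_ideal (fiber_gen x) (w - c *: v).

End Defs.
Arguments fiber_hilb_one [K] p q m x n d.

(* The invariant h = X0^(pm) X1^m does not vanish exactly where x0 x1 <> 0.
   There the monomials X0^a X1^b realise every weight (n,d) and do not vanish
   at x.  Fix such a v of weight (n,d) and v' of weight (-n,-d).  For any w of
   weight (n,d) the products w v' and v v' are invariant, hence congruent to
   their values at x modulo the fiber ideal; so w is congruent to a multiple
   of v, while v itself survives because it does not vanish at x. *)
From HB Require Import structures.
From mathcomp Require Import all_boot all_order all_algebra.
From mathcomp Require Import mpoly.
From mathcomp Require Import ring zify.
Set Implicit Arguments.
Unset Strict Implicit.
Unset Printing Implicit Defensive.
Import Order.TTheory GRing.Theory Num.Theory.
Local Open Scope ring_scope.

Section SemiInvariants.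
Variable K : numClosedFieldType.
Variables (p q m : nat).
Hypothesis m_gt0 : (0 < m)%N.

Local Notation Poly := {mpoly K[5]}.

Definition semi_invariant (chi : K -> K -> K) (g : Poly) : Prop :=
  forall t z : K, t != 0 -> z ^+ m = 1 -> gact p q t z g = chi t z *: g.

Lemma root_of_unity_neq0 (z : K) : z ^+ m = 1 -> z != 0.
Proof.
apply: contra_eqN => /eqP ->.
by rewrite expr0n eqn0Ngt m_gt0 eq_sym oner_eq0.
Qed.

Lemma gactM t z (g g' : Poly) :
  gact p q t z (g * g') = gact p q t z g * gact p q t z g'.
Proof. exact: rmorphM. Qed.

Lemma semi_invariantM chi chi' (g g' : Poly) :
  semi_invariant chi g -> semi_invariant chi' g' ->
  semi_invariant (fun t z => chi t z * chi' t z) (g * g').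
Proof.
move=> gP g'P t z t0 zm; rewrite gactM gP // g'P //.
by rewrite -scalerAl -scalerAr scalerA.
Qed.

Lemma semi_invariant_trivial chi (g : Poly) :
  (forall t z : K, t != 0 -> z ^+ m = 1 -> chi t z = 1) ->
  semi_invariant chi g -> G_invariant p q m g.
Proof. by move=> chi1 gP t z t0 zm; rewrite gP // chi1 // scale1r. Qed.

Lemma weight_dual_invariant (n : int) (d : 'I_m) (w v' : Poly) :
  is_weight p q n d w ->
  semi_invariant (fun t z => t ^ (- n) * z ^ (- d%:Z)) v' ->
  G_invariant p q m (w * v').
Proof.
move=> wP v'P; apply: semi_invariant_trivial (semi_invariantM wP v'P).
move=> t z t0 /root_of_unity_neq0 z0.
by rewrite mulrACA exprnP -!expfzDr // !subrr !expr0z mulr1.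
Qed.

End SemiInvariants.

Section Fiber.
Variable K : numClosedFieldType.
Variables (p q m : nat) (x : 'I_5 -> K).

Local Notation Poly := {mpoly K[5]}.
Local Notation I := (in_ideal (fiber_gen p q m x)).

Lemma meval_fiber_ideal (g : Poly) : onH p q x -> I g -> g.@[x] = 0.
Proof.
move=> xH [s [sI ->]]; rewrite raddf_sum big1_seq //= => c cs.
rewrite mevalM; case: (sI c cs) => [->|[h [_ ->]]].
  by rewrite xH mulr0.
by rewrite mevalB mevalC subrr mulr0.
Qed.

(* With A = (v v')(x) and B = (w v')(x), one has
   w - (B/A) v = A^-1 (v (w v' - B) - w (v v' - A)). *)
Lemma fiber_ideal_proportional (v v' w : Poly) :
  G_invariant p q m (v * v') -> G_invariant p q m (w * v') ->
  (v * v').@[x] != 0 ->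
  I (w - ((w * v').@[x] / (v * v').@[x]) *: v).
Proof.
set A := (v * v').@[x]; set B := (w * v').@[x] => vv'I wv'I A0.
exists [:: ((- A^-1) *: w, v * v' - A%:MP); (A^-1 *: v, w * v' - B%:MP)].
split.
  move=> c; rewrite !inE => /orP[] /eqP -> /=; right.
    by exists (v * v').
  by exists (w * v').
rewrite !big_cons big_nil addr0 /= -!mul_mpolyC mpolyCN rmorphM /=.
have AV : (A^-1)%:MP * A%:MP = 1 :> Poly by rewrite -rmorphM mulVf.
transitivity (w * ((A^-1)%:MP * A%:MP) - B%:MP * (A^-1)%:MP * v); last by ring.
by rewrite AV mulr1.
Qed.

Lemma fiber_hilb_one_of_dual_weights (n : int) (d : 'I_m) (v v' : Poly) :
  (0 < m)%N -> onH p q x ->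
  is_weight p q n d v ->
  semi_invariant p q m (fun t z => t ^ (- n) * z ^ (- d%:Z)) v' ->
  v.@[x] != 0 -> v'.@[x] != 0 ->
  fiber_hilb_one p q m x n d.
Proof.
move=> m_gt0 xH vP v'P vx v'x.
have vv'x : (v * v').@[x] != 0 by rewrite mevalM mulf_neq0.
exists v; split => //; split.
  by move=> /(meval_fiber_ideal xH) /eqP; apply/negP.
move=> w wP; eexists; apply: fiber_ideal_proportional vv'x.
  exact: weight_dual_invariant vP v'P.
exact: weight_dual_invariant wP v'P.
Qed.

End Fiber.

Section Monomials.
Variable K : numClosedFieldType.
Variables (p q m : nat).

Local Notation Poly := {mpoly K[5]}.

Definition mono01 (a b : nat) : Poly := 'X_(0 : 'I_5) ^+ a * 'X_(1 : 'I_5) ^+ b.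

Lemma meval_mono01 (x : 'I_5 -> K) a b :
  (mono01 a b).@[x] = x 0 ^+ a * x 1 ^+ b.
Proof. by rewrite mevalM !rmorphXn /= !mevalXU. Qed.

Lemma gact_mono01 t z a b : t != 0 -> z != 0 ->
  gact p q t z (mono01 a b) =
    (t ^ (a%:Z - (p * b)%N%:Z) * z ^ (- b%:Z)) *: mono01 a b.
Proof.
move=> t0 z0; rewrite /gact /mono01 rmorphM !rmorphXn /= !comp_mpolyXU.
rewrite -!tnth_nth !tnth_mktuple /wcoord /= !exprZn -scalerAl -scalerAr scalerA.
congr (_ *: _); rewrite expfzDr ?expf_neq0 // -invr_expz exprMn -exprVn -exprM.
by rewrite mulrA !exprVn -exprnN -exprnP.
Qed.

(* b = m (|n| + |e|) - e makes e + b divisible by m and p b >= |n|. *)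
Lemma mono01_semi_invariant (n e : int) : (0 < p)%N -> (0 < m)%N ->
  exists a b : nat,
    semi_invariant p q m (fun t z => t ^ n * z ^ e) (mono01 a b).
Proof.
move=> p_gt0 m_gt0.
set k : int := `|n|%:Z + `|e|%:Z; set b := absz (m%:Z * k - e)%R.
have k_le : k <= m%:Z * k by rewrite /k; nia.
have eb : e + b%:Z = m%:Z * k by rewrite /b; move: k_le; rewrite /k; lia.
have nb : `|n|%:Z <= (p * b)%N%:Z by move: eb; rewrite /k; nia.
exists (absz (n + (p * b)%N%:Z)), b => t z t0 zm.
have z0 := root_of_unity_neq0 m_gt0 zm.
have an : (absz (n + (p * b)%N%:Z))%:Z - (p * b)%N%:Z = n by lia.
have zeb : z ^ (e + b%:Z) = 1 by rewrite eb -exprz_exp -exprnP zm exp1rz.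
by rewrite gact_mono01 // an -[in z ^ e](addrK b%:Z e) expfzDr // zeb mul1r.
Qed.

End Monomials.

Theorem corollary3p3 (K : numClosedFieldType) (p q m : nat) :
  (0 < p)%N -> (0 < q)%N -> coprime p q -> (p <= q)%N -> (0 < m)%N ->
  exists h : {mpoly K[5]},
    G_invariant p q m h /\
    (exists x0 : 'I_5 -> K, onH p q x0 /\ h.@[x0] != 0) /\
    forall x : 'I_5 -> K, onH p q x -> h.@[x] != 0 ->
      forall (n : int) (d : 'I_m), fiber_hilb_one p q m x n d.
Proof.
move=> p_gt0 _ _ _ m_gt0.
exists (mono01 K (p * m) m); split; [|split].
- move=> t z t0 zm; rewrite gact_mono01 ?(root_of_unity_neq0 m_gt0 zm) //.
  by rewrite subrr expr0z mul1r -invr_expz -exprnP zm invr1 scale1r.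
- exists (fun i : 'I_5 => if val i \in [:: 2; 3]%N then 0 else 1); split.
    by rewrite /onH /Hpoly !(mevalB, mevalM, mevalXU) rmorphXn /= mevalXU /=
      expr1n !mulr1 mulr0 subr0 subrr.
  by rewrite meval_mono01 /= !expr1n mulr1 oner_neq0.
move=> x xH hx n d.
have [x0 x1] : x 0 != 0 /\ x 1 != 0.
  move: hx; rewrite meval_mono01 mulf_eq0 negb_or !expf_eq0 !negb_and.
  by rewrite muln_gt0 p_gt0 m_gt0 /= => /andP[].
have [a [b vP]] := mono01_semi_invariant K q n d%:Z p_gt0 m_gt0.
have [a' [b' v'P]] := mono01_semi_invariant K q (- n) (- d%:Z) p_gt0 m_gt0.
apply: (fiber_hilb_one_of_dual_weights m_gt0 xH vP v'P);
  by rewrite meval_mono01 mulf_neq0 // expf_neq0.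
Qed.
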